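(* In the setting described in the context, with $C_\phi$ a Lipschitz constant of $\phi$, for every $m$, $$\sum_{[C]\ \text{green cylinder}}\ \bigl\|H_{m}|_{[C]}\bigr\|_\infty\,\nu_m([C])\le e^{C_\phi/2}.$$
   Context: Setting: $A$ ($K\times K$) and $D$ ($N\times N$) are irreducible $\{0,1\}$-matrices; $M_0$ is a $(K+N)\times(K+N)$ $\{0,1\}$-matrix with diagonal blocks $A$, $D$ and some power with all entries positive; the alphabet is $\{\alpha_1,\dots,\alpha_K,\delta_1,\dots,\delta_N\}$; $\Sigma_0$ is the one-sided SFT for $M_0$ with shift $\sigma$ and metric $d(\omega,\omega')=2^{-\min\{k:\omega_k\ne\omega'_k\}}$; $\Sigma_A,\Sigma_D$ are the points with only $\alpha$-digits, resp. only $\delta$-digits; $\phi:\Sigma_0\to\mathbb R$ is Lipschitz with $|\phi(x)-\phi(y)|\le C_\phi d(x,y)$ and has the same pressure $P$ on $\Sigma_A$ and $\Sigma_D$. $\alpha_j\delta_l$ denotes any allowed word $\alpha$-digit then $\delta$-digit, $\delta_i\alpha_k$ any allowed word $\delta$-digit then $\alpha$-digit; $\delta^n,\alpha^n$ denote words of $n$ $\delta$-, resp. $\alpha$-digits. $A'\le A$, $D'\le D$ entrywise are $\{0,1\}$-matrices with $A'\ne A$, $D'\ne D$, rows of $A'$ indexed by $\alpha$-digits that can follow a $\delta$-digit nonzero, rows of $D'$ indexed by $\delta$-digits that can follow an $\alpha$-digit nonzero; $(n_m),(n'_m)$ increasing integer sequences tending to $\infty$. $\Sigma_m\subset\Sigma_0$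 is obtained by additionally forbidding: $\alpha_j\delta_l\delta^n\delta_i\alpha_k$ with $n<n'_m-2$, or with $n\ge n'_m-2$ and $\delta_l$ followed by the first $n'_m-2$ letters of $\delta^n$ not $D'$-eligible; $\delta_i\alpha_k\alpha^n\alpha_j\delta_l$ with $n<n_m-2$, or with $n\ge n_m-2$ and $\alpha_k$ followed by the first $n_m-2$ letters of $\alpha^n$ not $A'$-eligible (eligible = all consecutive transitions allowed by the matrix). $P_m$ is the pressure of $\phi$ on $\Sigma_m$. Induced scheme: green cylinders are the 2-cylinders $[\alpha_j\delta_l]$ and $[\delta_i\alpha_k]$, and $G$ is their union. For $x\in[\delta_i\alpha_k]$ its $g_m$-preimages are the points $y=\alpha_j\delta_l w x$ (with $w$ a $\delta$-word) such that $\alpha_j\delta_l w\delta_i\alpha_k$ is allowed in $\Sigma_m$, with return time $r_m(y)=|w|+2$; symmetrically for $x\in[\alpha_j\delta_l]$. The induced transfer operator is $\mathcal L_{G,m}f(x)=\sum_{y:\,g_m(y)=x}e^{S_{r_m(y)}\phi(y)-r_m(y)P_m}f(y)$, with $S_n\phi=\sum_{i<n}\phi\circ\sigma^i$. It has spectral radius 1; $\nu_m$ is the probability with $\int\mathcal L_{G,m}f\,d\nu_m=\int f\,d\nu_m$, and $H_m=\lim_{n}\frac1n\sum_{k=0}^{n-1}\mathcal L_{G,m}^k(\mathbf 1_G)$ (uniform limit) is the positive continuous eigenfunction $\mathcal L_{G,m}H_m=H_m$ with $\int H_m\,d\nu_m=1$. *)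

From HB Require Import structures.
From mathcomp Require Import all_boot all_order all_algebra.
From mathcomp Require Import all_classical all_reals all_analysis.
Set Implicit Arguments.
Unset Strict Implicit.
Unset Printing Implicit Defensive.
Import Order.TTheory GRing.Theory Num.Theory.
Import numFieldNormedType.Exports.
Local Open Scope classical_set_scope.
Local Open Scope ring_scope.

(* Convention: the alphabet has K.+1 alpha-digits (indices 0..K) followed by
   N.+1 delta-digits (A' <> A and D' <> D force K,N >= 1). *)
Definition letter (K N : nat) := 'I_(K.+1 + N.+1).

Definition isA {K N : nat} (x : letter K N) : bool := (x < K.+1)%N.

Definition sq (K N : nat) := nat -> letter K N.
HB.instance Definition _ (K N : nat) := Choice.on (sq K N).
HB.instance Definition _ (K N : nat) :=
  isPointed.Build (sq K N) (fun _ => lshift N.+1 (@ord0 K)).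

(* cylinder sets and the generated (= Borel) sigma-algebra *)
Definition cyl_sets (K N : nat) : set (set (sq K N)) :=
  fun C => exists (n : nat) (w : nat -> letter K N),
    C = [set x | forall t, (t < n)%N -> x t = w t].
Notation Msp K N := (g_sigma_algebraType (@cyl_sets K N)).

Definition zero_one {n : nat} (M : 'M[int]_n) : Prop :=
  forall i j, M i j = 0 \/ M i j = 1.
Definition irreducible_mx {n : nat} (M : 'M[int]_n) : Prop :=
  forall i j, exists k : nat, 0 < (M ^+ k) i j.
Definition positive_power {n : nat} (M : 'M[int]_n) : Prop :=
  exists k : nat, forall i j, 0 < (M ^+ k) i j.

Section Shift.
Context {K N : nat}.

Definition Sigma0 (M0 : 'M[int]_(K.+1 + N.+1)) : set (sq K N) :=
  [set x | forall k, M0 (x k) (x k.+1) = 1].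
Definition SigmaA M0 : set (sq K N) := Sigma0 M0 `&` [set x | forall k, isA (x k)].
Definition SigmaD M0 : set (sq K N) := Sigma0 M0 `&` [set x | forall k, ~~ isA (x k)].

Definition shiftn (i : nat) (x : sq K N) : sq K N := fun k => x (i + k)%N.
Definition birkhoff {R : realType} (n : nat) (phi : sq K N -> R) (x : sq K N) : R :=
  \sum_(i < n) phi (shiftn i x).

Definition sq_dist {R : realType} (x y : sq K N) : R :=
  match pselect (exists k, x k != y k) with
  | left h => (2 : R) ^- (ex_minn h)
  | right _ => 0
  end.

Definition subword (x : sq K N) (p n : nat) : seq (letter K N) :=
  mkseq (fun t => x (p + t)%N) n.

Definition partition_fun {R : realType} (X : set (sq K N)) (phi : sq K N -> R)
    (n : nat) : R :=
  \sum_(w : n.-tuple (letter K N))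
    (if `[< exists x, X x /\ subword x 0 n = tval w >] then
       expR (sup [set birkhoff n phi x | x in X `&` [set x | subword x 0 n = tval w]])
     else 0).
Definition top_pressure {R : realType} (X : set (sq K N)) (phi : sq K N -> R) : R :=
  limn (fun n : nat => ln (partition_fun X phi n) / n%:R).

Definition relA (A' : 'M[int]_K.+1) (a b : letter K N) : bool :=
  match fintype.split a, fintype.split b with inl i, inl j => A' i j == 1 | _, _ => false end.
Definition relD (D' : 'M[int]_N.+1) (a b : letter K N) : bool :=
  match fintype.split a, fintype.split b with inr i, inr j => D' i j == 1 | _, _ => false end.
Definition eligible (r : rel (letter K N)) (s : seq (letter K N)) : bool :=
  if s is a :: s' then path r a s' else true.

(* the additionally forbidden words of Sigma_m (nD = n'_m, nA = n_m) *)
Definition forbD (D' : 'M[int]_N.+1) (nD : nat) (u : seq (letter K N)) : Prop :=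
  exists (aj dl di ak : letter K N) (w : seq (letter K N)),
    u = [:: aj, dl & w ++ [:: di; ak]] /\ isA aj /\ ~~ isA dl /\
    all (fun c => ~~ isA c) w /\ ~~ isA di /\ isA ak /\
    ((size w < nD - 2)%N \/
     ((nD - 2 <= size w)%N /\ ~~ eligible (relD D') (dl :: take (nD - 2) w))).
Definition forbA (A' : 'M[int]_K.+1) (nA : nat) (u : seq (letter K N)) : Prop :=
  exists (di ak aj dl : letter K N) (w : seq (letter K N)),
    u = [:: di, ak & w ++ [:: aj; dl]] /\ ~~ isA di /\ isA ak /\
    all (fun c => isA c) w /\ isA aj /\ ~~ isA dl /\
    ((size w < nA - 2)%N \/
     ((nA - 2 <= size w)%N /\ ~~ eligible (relA A') (ak :: take (nA - 2) w))).
Definition forbidden A' D' nA nD (u : seq (letter K N)) : Prop :=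
  forbD D' nD u \/ forbA A' nA u.

Definition SigmaM M0 A' D' nA nD : set (sq K N) :=
  Sigma0 M0 `&` [set x | forall p n, ~ forbidden A' D' nA nD (subword x p n)].

Definition allowed_m (M0 : 'M[int]_(K.+1 + N.+1)) A' D' nA nD
    (u : seq (letter K N)) : Prop :=
  eligible (fun a b => M0 a b == 1) u /\
  forall i n, ~ forbidden A' D' nA nD (take n (drop i u)).

Definition cyl2 (a b : letter K N) : set (sq K N) := [set x | x 0%N = a /\ x 1%N = b].
Definition green (M0 : 'M[int]_(K.+1 + N.+1)) (a b : letter K N) : bool :=
  (isA a != isA b) && (M0 a b == 1).
Definition Gset M0 : set (sq K N) := Sigma0 M0 `&` [set x | isA (x 0%N) != isA (x 1%N)].

Definition prepend (u : seq (letter K N)) (x : sq K N) : sq K N :=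
  fun k => if (k < size u)%N then nth (x 0%N) u k else x (k - size u)%N.

(* y = a b w x is a g_m-preimage of x (return time size w + 2) *)
Definition preimage_cond M0 A' D' nA nD (a b : letter K N) (w : seq (letter K N))
    (x : sq K N) : Prop :=
  isA a = isA (x 1%N) /\ isA b = isA (x 0%N) /\ all (fun c => isA c == isA (x 0%N)) w /\
  allowed_m M0 A' D' nA nD (a :: b :: w ++ [:: x 0%N; x 1%N]).

Definition LG {R : realType} M0 A' D' nA nD (phi : sq K N -> R) (Pm : R)
    (f : sq K N -> \bar R) (x : sq K N) : \bar R :=
  (\sum_(0 <= n <oo)
    \sum_(a : letter K N) \sum_(b : letter K N) \sum_(w : n.-tuple (letter K N))
      (if `[< preimage_cond M0 A' D' nA nD a b w x >] then
         (expR (birkhoff n.+2 phi (prepend [:: a, b & tval w] x) - n.+2%:R * Pm))%:E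
           * f (prepend [:: a, b & tval w] x)
       else 0))%E.

Definition cesaro_LG {R : realType} M0 A' D' nA nD (phi : sq K N -> R) (Pm : R)
    (n : nat) (x : sq K N) : \bar R :=
  ((n%:R^-1)%:E * \sum_(k < n)
     iter k (LG M0 A' D' nA nD phi Pm) (fun y => (\1_(Gset M0) y : R)%:E) x)%E.

Definition d_continuous_on {R : realType} (X : set (sq K N)) (f : sq K N -> R) : Prop :=
  forall x, X x -> forall e : R, 0 < e -> exists2 del : R, 0 < del &
    forall y, X y -> sq_dist x y < del -> `|f x - f y| < e.

End Shift.

From HB Require Import structures.
From mathcomp Require Import all_boot all_order all_algebra.
From mathcomp Require Import all_classical all_reals all_analysis.
From mathcomp Require Import measurable_realfun zify lra.
Import Order.TTheory GRing.Theory Num.Theory.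
Import numFieldNormedType.Exports.
Local Open Scope classical_set_scope.
Local Open Scope ring_scope.

(* The induced operator only prepends words, so its iterates have bounded distortion:
   if x, x' in G agree on their first n >= 2 letters, then
   L^k 1_G (x) <= exp (Cphi 2^-n) L^k 1_G (x').  Whether u x is a preimage of x depends
   only on the first two letters of x, so the preimages u x and u x' come in pairs; they
   agree on n + |u| letters, their Birkhoff sums along u differ by at most
   Cphi (2^-n - 2^-(n+|u|)), and the induction hypothesis at level n + |u| supplies the
   missing factor exp (Cphi 2^-(n+|u|)).  The bound passes to the Cesaro averages and to
   their uniform limit H_m, so on every green cylinder [C] (where n = 2)
   sup_[C] H_m <= exp (Cphi/4) inf_[C] H_m.  As nu_m is carried by G, which the green
   cylinders partition, summing over them gives at most
   exp (Cphi/4) \int H_m dnu_m = exp (Cphi/4) <= exp (Cphi/2), because Cphi >= 0. *)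

Lemma sum_inv2_pow (R : realType) n r :
  \sum_(i < r) (2 : R) ^- (n + r - i) = 2 ^- n - 2 ^- (n + r).
Proof.
elim: r n => [|r IH] n; first by rewrite big_ord0 addn0 subrr.
rewrite big_ord_recr /= (_ : n + r.+1 - r = n.+1)%N; last by lia.
under eq_bigr => i _ do rewrite addnS -addSn.
by rewrite IH addSn -addnS exprS invfM; lra.
Qed.

Lemma le_mul_of_approx (R : realType) (a b c : R) : 0 <= c ->
  (forall e, 0 < e -> exists u v, [/\ `|u - a| < e, `|v - b| < e & u <= c * v]) ->
  a <= c * b.
Proof.
move=> c_ge0 approx; apply/ler_addgt0Pr => e e_gt0.
have c1_gt0 : 0 < c + 1 by rewrite ltr_wpDl.
have [u [v [ua vb uv]]] := approx _ (divr_gt0 e_gt0 c1_gt0).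
move: ua vb; rewrite !ltr_norml => /andP[ua _] /andP[_ vb].
have cvb : c * v <= c * (b + e / (c + 1)) by rewrite ler_wpM2l // ltW // -ltrBlDl.
have ee : e / (c + 1) * (c + 1) = e by rewrite divfK // gt_eqF.
set q := e / (c + 1) in ua vb cvb ee; nra.
Qed.

Lemma lee_sum_scale (R : realType) (I : finType) (F G : I -> \bar R) (c : \bar R) :
  (0 <= c)%E -> (forall i, 0 <= G i)%E -> (forall i, F i <= c * G i)%E ->
  (\sum_i F i <= c * \sum_i G i)%E.
Proof. by move=> c0 G0 FG; rewrite ge0_sume_distrr //; apply: lee_sum. Qed.

(* The integral of a nonnegative function is a supremum over the simple functions below
   it, so no measurability is needed; H_m is only known to be continuous on G. *)
Lemma ge0_le_integral_nomeas d (T : measurableType d) (R : realType)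
    (mu : {measure set T -> \bar R}) (D : set T) (f g : T -> \bar R) :
  (forall x, D x -> 0 <= f x)%E -> (forall x, D x -> f x <= g x)%E ->
  (\int[mu]_(x in D) f x <= \int[mu]_(x in D) g x)%E.
Proof.
move=> f0 fg; have g0 x : D x -> (0 <= g x)%E.
  by move=> Dx; exact: le_trans (f0 _ Dx) (fg _ Dx).
rewrite !ge0_integralE //; apply: ereal_sup_le => _ [h hf <-]; exists h => // x.
apply: le_trans (hf x) _; rewrite /patch; case: ifPn => // /set_mem; exact: fg.
Qed.

Lemma probability_setI_full {d} {T : measurableType d} {R : realType}
    {P : probability T R} {A B : set T} :
  measurable A -> measurable B -> P B = 1%E -> P (A `&` B) = P A.
Proof.
move=> mA mB PB1; rewrite [RHS](measureDI P mA mB).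
rewrite [X in (_ = X + _)%E](_ : _ = 0%E) ?add0e //.
apply/eqP; rewrite eq_le measure_ge0 andbT.
have <- : P (~` B) = 0%E by rewrite probability_setC // PB1 subee.
by apply: le_measure; rewrite ?inE //; [exact: measurableD | exact: measurableC].
Qed.

Section fibre_sup_sum.
Context {d} {T : measurableType d} {R : realType} {I : finType}.
Variable mu : {measure set T -> \bar R}.
Context {G : set T} {idx : T -> I} {H : T -> R} {E : R}.
Hypothesis mG : measurable G.
Hypothesis m_fibre : forall i, measurable (idx @^-1` [set i]).
Hypothesis E_gt0 : 0 < E.
Hypothesis H_ge0 : forall x, G x -> 0 <= H x.
Hypothesis H_distortion : forall x y, G x -> G y -> idx x = idx y -> H x <= E * H y.

Let F i := G `&` idx @^-1` [set i].
Let s i := sup [set H y | y in F i].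

Let mF i : measurable (F i). Proof. exact: measurableI. Qed.

Let F_ub i x : F i x -> ubound [set H y | y in F i] (E * H x).
Proof. by move=> [Gx <-] _ [y [Gy /= yx] <-]; exact: H_distortion. Qed.

Let s_le i x : F i x -> s i <= E * H x.
Proof. by move=> Fx; apply: ge_sup; [exists (H x), x | exact: F_ub]. Qed.

Let s_ge0 i : 0 <= s i.
Proof.
have [F0|/set0P[x Fx]] := eqVneq (F i) set0.
  by rewrite /s F0 image_set0 sup0.
apply: (le_trans (H_ge0 _ Fx.1)); apply: ub_le_sup; last by exists x.
by exists (E * H x); exact: F_ub.
Qed.

Let fibre_sup_termE i :
  (ereal_sup [set (H y)%:E | y in F i] * mu (F i) = (s i)%:E * mu (F i))%E.
Proof.
have [F0|/set0P[x Fx]] := eqVneq (F i) set0.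
  by rewrite F0 measure0 !mule0.
rewrite (_ : [set (H y)%:E | y in F i] = EFin @` [set H y | y in F i]).
  by rewrite ereal_sup_EFin //; [exists (E * H x); exact: F_ub | exists (H x), x].
by rewrite image_comp.
Qed.

Lemma sum_fibre_sup_le :
  (\sum_i ereal_sup [set (H y)%:E | y in F i] * mu (F i)
   <= E%:E * \int[mu]_(x in G) (H x)%:E)%E.
Proof.
under eq_bigr do rewrite fibre_sup_termE.
pose g x := (\sum_i (s i / E)%:E * (\1_(F i) x)%:E)%E.
have sE_ge0 i : 0 <= s i / E by rewrite divr_ge0 // ltW.
have mind i : measurable_fun G (fun x => (\1_(F i) x : R)%:E).
  by apply/measurable_EFinP; exact: measurable_indic.
have -> : (\sum_i (s i)%:E * mu (F i) = E%:E * \int[mu]_(x in G) g x)%E.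
  rewrite ge0_integral_sum // => [|i|i x _]; last 2 first.
  - exact: measurable_funeM.
  - by rewrite mule_ge0 // lee_fin.
  rewrite ge0_sume_distrr => [|i _]; last first.
    by apply: integral_ge0 => x _; rewrite mule_ge0 // lee_fin.
  apply: eq_bigr => i _; rewrite ge0_integralZl_EFin // integral_indic //.
  by rewrite setIidl ?muleA -?EFinM 1?mulrC ?divfK ?gt_eqF // => x [].
apply: lee_wpmul2l; first by rewrite lee_fin ltW.
apply: ge0_le_integral_nomeas => [x _|x Gx].
  by apply: sume_ge0 => i _; rewrite mule_ge0 // lee_fin.
rewrite /g (bigD1 (idx x)) //= big1 ?adde0 => [|i ix]; last first.
  by rewrite indicE memNset ?mule0 // => -[_ /= /esym/eqP]; rewrite (negbTE ix).
rewrite indicE mem_set // mule1 lee_fin ler_pdivrMr // mulrC.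
exact: s_le.
Qed.

End fibre_sup_sum.

Section sequence_space.
Context {K N : nat}.
Implicit Types (x y : sq K N) (u : seq (letter K N)).

Definition agree n x y := forall t, (t < n)%N -> x t = y t.

Lemma sq_dist_le_agree (R : realType) n x y : agree n x y -> @sq_dist K N R x y <= 2 ^- n.
Proof.
move=> xy; rewrite /sq_dist; case: pselect => [h|_]; last by rewrite invr_ge0 exprn_ge0.
case: ex_minnP => k /eqP kxy _.
have nk : (n <= k)%N by rewrite leqNgt; apply/negP => /xy.
by rewrite -!exprVn ler_wiXn2l // invf_le1 // ler1n.
Qed.

Lemma sq_dist_gt0 (R : realType) x y : x 0%N != y 0%N -> 0 < @sq_dist K N R x y.
Proof.
move=> xy0; rewrite /sq_dist; case: pselect => [h|[]]; last by exists 0%N.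
by rewrite invr_gt0 exprn_gt0.
Qed.

Lemma Sigma0_shiftn {M0} {x} i : Sigma0 M0 x -> Sigma0 M0 (shiftn i x).
Proof. by move=> Sx k; rewrite /shiftn (addnS i k); exact: Sx. Qed.

Lemma positive_power_succ (M0 : 'M[int]_(K.+1 + N.+1)) i :
  zero_one M0 -> positive_power M0 -> exists j, M0 i j = 1.
Proof.
move=> M01 [[|k] Mk].
  by have := Mk (lshift N.+1 ord0) (rshift K.+1 ord0); rewrite expr0 mxE.
apply/not_existsP => no_succ; have := Mk i i.
rewrite exprS mxE big1 ?ltxx // => j _.
by case: (M01 i j) => [->|/no_succ//]; rewrite mul0r.
Qed.

Lemma Sigma0_from (M0 : 'M[int]_(K.+1 + N.+1)) a :
  zero_one M0 -> positive_power M0 -> exists2 x, Sigma0 M0 x & x 0%N = a.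
Proof.
move=> M01 M0pos.
pose succ i := odflt i [pick j | M0 i j == 1].
have M0succ i : M0 i (succ i) = 1.
  rewrite /succ; case: pickP => [j /eqP //|no_succ].
  by have [j M0ij] := positive_power_succ _ i M01 M0pos; have := no_succ j; rewrite M0ij eqxx.
by exists (fun t => iter t succ a) => // k; exact: M0succ.
Qed.

Lemma lipschitz_const_ge0 {R : realType} {M0 : 'M[int]_(K.+1 + N.+1)}
    {phi : sq K N -> R} {Cphi : R} :
  zero_one M0 -> positive_power M0 ->
  (forall x y, Sigma0 M0 x -> Sigma0 M0 y -> `|phi x - phi y| <= Cphi * sq_dist x y) ->
  0 <= Cphi.
Proof.
move=> M01 M0pos Lip.
have [x Sx x0] := Sigma0_from _ (lshift N.+1 ord0) M01 M0pos.
have [y Sy y0] := Sigma0_from _ (rshift K.+1 ord0) M01 M0pos.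
have dxy : 0 < @sq_dist K N R x y by apply: sq_dist_gt0; rewrite x0 y0.
by rewrite -(pmulr_lge0 _ dxy); exact: le_trans (Lip _ _ Sx Sy).
Qed.

Lemma prepend_lt u x k : (k < size u)%N -> prepend u x k = nth (x 0%N) u k.
Proof. by move=> ku; rewrite /prepend ku. Qed.

Lemma prepend_ge u x k : (size u <= k)%N -> prepend u x k = x (k - size u)%N.
Proof. by move=> uk; rewrite /prepend ltnNge uk. Qed.

Lemma agree_prepend u n x y : agree n x y -> agree (n + size u) (prepend u x) (prepend u y).
Proof.
move=> xy t tn; case: (ltnP t (size u)) => tu.
  by rewrite !prepend_lt // (set_nth_default (y 0%N)).
by rewrite !prepend_ge //; apply: xy; lia.
Qed.

Lemma prepend_Sigma0 M0 a b w x : Sigma0 M0 x ->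
  eligible (fun a b => M0 a b == 1) (a :: b :: w ++ [:: x 0%N; x 1%N]) ->
  Sigma0 M0 (prepend [:: a, b & w] x).
Proof.
move=> Sx /(pathP a) uxP k; set u := [:: a, b & w].
have prepend_nth j : (j <= size u)%N ->
    prepend u x j = nth a (u ++ [:: x 0%N; x 1%N]) j.
  move=> ju; rewrite nth_cat; case: ltnP => ju'.
    by rewrite prepend_lt // (set_nth_default a).
  by rewrite prepend_ge // (_ : j = size u) ?subnn //; apply/eqP; rewrite eqn_leq ju.
case: (ltnP k (size u)) => ku; last by rewrite !prepend_ge ?subSn //; lia.
rewrite !prepend_nth ?(ltnW ku) //; apply/eqP/uxP.
by rewrite /u /= size_cat /= in ku *; lia.
Qed.

Definition prefix n x : n.-tuple (letter K N) := [tuple x (val i) | i < n].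

Let d0 : letter K N := lshift N.+1 ord0.

Lemma nth_prefix n x t d : (t < n)%N -> nth d (prefix n x) t = x t.
Proof. by move=> tn; rewrite -[t]/(val (Ordinal tn)) -tnth_nth tnth_mktuple. Qed.

Lemma measurable_prefix_pred n (Q : pred (n.-tuple (letter K N))) :
  measurable ([set x : sq K N | Q (prefix n x)] : set (Msp K N)).
Proof.
have -> : ([set x | Q (prefix n x)] : set (Msp K N)) =
    \bigcup_(w in [set w | Q w]) [set x | prefix n x = w].
  apply/seteqP; split => x /=; first by move=> Qx; exists (prefix n x).
  by move=> [w Qw /= ->].
apply: fin_bigcup_measurable => [|w _]; first exact: finite_finset.
apply: sub_gen_smallest; exists n, (nth d0 w).
apply/seteqP; split => x /=; first by move=> <- t tn; rewrite nth_prefix.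
move=> xw; apply: eq_from_tnth => i.
by rewrite /prefix tnth_mktuple (tnth_nth d0) xw ?ltn_ord.
Qed.

Lemma measurable_Sigma0 M0 : measurable (Sigma0 M0 : set (Msp K N)).
Proof.
pose step k (w : k.+2.-tuple (letter K N)) := M0 (nth d0 w k) (nth d0 w k.+1) == 1.
have -> : (Sigma0 M0 : set (Msp K N)) = \bigcap_k [set x | step k (prefix k.+2 x)].
  apply/seteqP; split => [x Sx k _|x Sx k] /=; first by rewrite /step !nth_prefix // Sx.
  by have := Sx k I; rewrite /step /= !nth_prefix // => /eqP.
by apply: bigcapT_measurable => k; exact: measurable_prefix_pred.
Qed.

Lemma measurable_Gset M0 : measurable (Gset M0 : set (Msp K N)).
Proof.
apply: measurableI; first exact: measurable_Sigma0.
pose Q (w : 2.-tuple (letter K N)) := isA (nth d0 w 0) != isA (nth d0 w 1).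
have -> : ([set x | isA (x 0%N) != isA (x 1%N)] : set (Msp K N)) =
    [set x | Q (prefix 2 x)].
  by apply/seteqP; split => x /=; rewrite /Q !nth_prefix.
exact: measurable_prefix_pred.
Qed.

Lemma measurable_cyl2 a b : measurable (cyl2 a b : set (Msp K N)).
Proof.
pose Q (w : 2.-tuple (letter K N)) := (nth d0 w 0 == a) && (nth d0 w 1 == b).
have -> : (cyl2 a b : set (Msp K N)) = [set x | Q (prefix 2 x)].
  apply/seteqP; split => x /=; rewrite /Q !nth_prefix //.
  - by move=> [-> ->]; rewrite !eqxx.
  - by move=> /andP[/eqP ? /eqP ?].
exact: measurable_prefix_pred.
Qed.

End sequence_space.

Section distortion.
Context {R : realType} {K N : nat} {M0 : 'M[int]_(K.+1 + N.+1)}.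
Context {A' : 'M[int]_K.+1} {D' : 'M[int]_N.+1} {nA nD : nat}.
Context {phi : sq K N -> R} {Pm Cphi : R}.
Hypothesis phi_lip : forall x y, Sigma0 M0 x -> Sigma0 M0 y ->
  `|phi x - phi y| <= Cphi * sq_dist x y.
Hypothesis Cphi_ge0 : 0 <= Cphi.

Local Notation L := (LG M0 A' D' nA nD phi Pm).
Local Notation G := (Gset M0).
Local Notation indic_G := (fun y => (\1_(Gset M0) y : R)%:E).

Lemma birkhoff_agree_le {r n y y'} : Sigma0 M0 y -> Sigma0 M0 y' -> agree (n + r) y y' ->
  birkhoff r phi y - birkhoff r phi y' <= Cphi * (2 ^- n - 2 ^- (n + r)).
Proof.
move=> Sy Sy' yy'; rewrite /birkhoff -sumrB -sum_inv2_pow mulr_sumr.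
apply: ler_sum => i _; apply: le_trans (ler_norm _) _.
apply: le_trans (phi_lip _ _ (Sigma0_shiftn i Sy) (Sigma0_shiftn i Sy')) _.
rewrite ler_wpM2l // sq_dist_le_agree // => t tn; apply: yy'.
by have := ltn_ord i; lia.
Qed.

Definition bounded_distortion (g : sq K N -> \bar R) := forall n, (2 <= n)%N ->
  forall x x', G x -> G x' -> agree n x x' -> (g x <= (expR (Cphi * 2 ^- n))%:E * g x')%E.

Definition LG_summand (g : sq K N -> \bar R) n a b (w : n.-tuple (letter K N)) x :=
  (if `[< preimage_cond M0 A' D' nA nD a b w x >] then
     (expR (birkhoff n.+2 phi (prepend [:: a, b & tval w] x) - n.+2%:R * Pm))%:E
       * g (prepend [:: a, b & tval w] x)
   else 0)%E.

Lemma LG_summandE g x : L g x =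
  (\sum_(0 <= n <oo) \sum_a \sum_b \sum_(w : n.-tuple _) LG_summand g n a b w x)%E.
Proof. by []. Qed.

Lemma LG_summand_ge0 g n a b w x : (forall y, 0 <= g y)%E -> (0 <= LG_summand g n a b w x)%E.
Proof.
move=> g_ge0; rewrite /LG_summand; case: asboolP => // _.
by rewrite mule_ge0 // lee_fin expR_ge0.
Qed.

Lemma LG_ge0 g x : (forall y, 0 <= g y)%E -> (0 <= L g x)%E.
Proof.
move=> g_ge0; rewrite LG_summandE; apply: nneseries_ge0 => n _ _.
do 3 apply: sume_ge0 => ? _; exact: LG_summand_ge0.
Qed.

Lemma iter_LG_ge0 k x : (0 <= iter k L indic_G x)%E.
Proof.
elim: k x => [|k IH] x /=; last exact: LG_ge0.
by rewrite lee_fin indicE; case: (_ \in _).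
Qed.

Lemma prepend_Gset a b w x : G x -> preimage_cond M0 A' D' nA nD a b w x ->
  G (prepend [:: a, b & w] x).
Proof.
move=> [Sx xG] [xa [xb [_ [xM0 _]]]]; split; first exact: prepend_Sigma0.
by rewrite /= xa xb eq_sym.
Qed.

Lemma LG_summand_distortion g n0 a b (w : n0.-tuple (letter K N)) n x x' :
  (forall y, 0 <= g y)%E -> bounded_distortion g -> (2 <= n)%N ->
  G x -> G x' -> agree n x x' ->
  (LG_summand g n0 a b w x <= (expR (Cphi * 2 ^- n))%:E * LG_summand g n0 a b w x')%E.
Proof.
move=> g_ge0 g_bd n2 Gx Gx' xx'.
have [x0 x1] : x 0%N = x' 0%N /\ x 1%N = x' 1%N by split; apply: xx'; lia.
have pc_eq : preimage_cond M0 A' D' nA nD a b w x = preimage_cond M0 A' D' nA nD a b w x'.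
  by rewrite /preimage_cond x0 x1.
rewrite /LG_summand -pc_eq; case: asboolP => [pc|_]; last by rewrite mule0.
have pc' := pc; rewrite pc_eq in pc'.
set y := prepend _ x; set y' := prepend _ x'.
have Gy : G y by exact: prepend_Gset.
have Gy' : G y' by exact: prepend_Gset.
have yy' : agree (n + n0.+2) y y'.
  by move/(agree_prepend [:: a, b & tval w]): xx'; rewrite /= size_tuple.
apply: le_trans (lee_wpmul2l _ (g_bd _ _ _ _ Gy Gy' yy')) _.
- by rewrite lee_fin expR_ge0.
- by lia.
rewrite muleA -EFinM muleA -EFinM lee_wpmul2r // lee_fin -!expRD ler_expR.
by have := birkhoff_agree_le Gy.1 Gy'.1 yy'; rewrite mulrBr; lra.
Qed.

Lemma LG_bounded_distortion g : (forall y, 0 <= g y)%E -> bounded_distortion g ->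
  bounded_distortion (L g).
Proof.
move=> g_ge0 g_bd n n2 x x' Gx Gx' xx'.
have exp_ge0 : (0 <= (expR (Cphi * 2 ^- n))%:E)%E by rewrite lee_fin expR_ge0.
have summand_ge0 k a b w y : (0 <= LG_summand g k a b w y)%E by exact: LG_summand_ge0.
rewrite !LG_summandE -nneseriesZl => [|k _]; last by do 3 apply: sume_ge0 => ? _.
apply: lee_nneseries => [k _ _|k _]; first by do 3 apply: sume_ge0 => ? _.
apply: lee_sum_scale => // [a|a]; first by do 2 apply: sume_ge0 => ? _.
apply: lee_sum_scale => // [b|b]; first by apply: sume_ge0 => ? _.
apply: lee_sum_scale => // w; exact: LG_summand_distortion.
Qed.

Lemma iter_LG_bounded_distortion k : bounded_distortion (iter k L indic_G).
Proof.
elim: k => [|k IH] /=; last by apply: LG_bounded_distortion IH => y; exact: iter_LG_ge0.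
move=> n _ x x' Gx Gx' _; rewrite !indicE !mem_set // mule1 lee_fin -[leLHS]expR0 ler_expR.
by rewrite mulr_ge0 // invr_ge0 exprn_ge0.
Qed.

Lemma cesaro_LG_distortion n x x' : G x -> G x' -> agree 2 x x' ->
  (cesaro_LG M0 A' D' nA nD phi Pm n x <=
   (expR (Cphi * 2 ^- 2))%:E * cesaro_LG M0 A' D' nA nD phi Pm n x')%E.
Proof.
move=> Gx Gx' xx'; rewrite /cesaro_LG muleCA.
apply: lee_wpmul2l; first by rewrite lee_fin invr_ge0.
apply: lee_sum_scale => [|k|k]; [by rewrite lee_fin expR_ge0|exact: iter_LG_ge0|].
exact: iter_LG_bounded_distortion.
Qed.

Lemma uniform_limit_distortion {H : sq K N -> R} :
  (forall e : R, 0 < e -> exists n0 : nat, forall n, (n0 <= n)%N ->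
     forall x, G x -> (`| cesaro_LG M0 A' D' nA nD phi Pm n x - (H x)%:E | < e%:E)%E) ->
  forall x x', G x -> G x' -> agree 2 x x' -> H x <= expR (Cphi * 2 ^- 2) * H x'.
Proof.
move=> ces_cvg x x' Gx Gx' xx'; apply: le_mul_of_approx; first exact: expR_ge0.
move=> e e_gt0; have [n0 ces_near] := ces_cvg e e_gt0.
move: (ces_near n0 (leqnn _) x Gx) (ces_near n0 (leqnn _) x' Gx').
move: (cesaro_LG_distortion n0 x x' Gx Gx' xx').
case: (cesaro_LG _ _ _ _ _ _ _ n0 x) => [u| |] //.
case: (cesaro_LG _ _ _ _ _ _ _ n0 x') => [v| |] //.
by rewrite -!EFinB /= !lte_fin -EFinM lee_fin => uv ux vx'; exists u, v.
Qed.

End distortion.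

Section green_cylinders.
Context {K N : nat} (M0 : 'M[int]_(K.+1 + N.+1)).

Definition first_two (x : sq K N) := (x 0%N, x 1%N).

Lemma first_two_fibre a b : first_two @^-1` [set (a, b)] = cyl2 a b.
Proof. by apply/seteqP; split => x; rewrite /first_two /cyl2 /= => -[-> ->]. Qed.

Lemma measurable_first_two_fibre p : measurable (first_two @^-1` [set p] : set (Msp K N)).
Proof. by case: p => a b; rewrite first_two_fibre; exact: measurable_cyl2. Qed.

Lemma Gset_first_two_fibre a b : Gset M0 `&` first_two @^-1` [set (a, b)] =
  if green M0 a b then cyl2 a b `&` Sigma0 M0 else set0.
Proof.
rewrite first_two_fibre; apply/seteqP; split => [x [[Sx xG] [x0 x1]]|x].
  have -> : green M0 a b by rewrite /green -x0 -x1 xG (Sx 0%N) eqxx.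
  by split.
case: ifP => [/andP[ab _] [[x0 x1] Sx]|_ //]; split=> //; split=> //=.
by rewrite x0 x1.
Qed.

Lemma green_sum_fibreE (R : realType) (nu : probability (Msp K N) R) (H : sq K N -> R) :
  nu (Gset M0) = 1%E ->
  (\sum_a \sum_b (if green M0 a b then
        ereal_sup [set (H x)%:E | x in cyl2 a b `&` Sigma0 M0] * nu (cyl2 a b)
      else 0) =
   \sum_p ereal_sup [set (H x)%:E | x in Gset M0 `&` first_two @^-1` [set p]]
      * nu (Gset M0 `&` first_two @^-1` [set p]))%E.
Proof.
move=> nuG; have nuS : nu (Sigma0 M0) = 1%E.
  have GS : (nu (Gset M0) <= nu (Sigma0 M0))%E.
    apply: le_measure; rewrite ?inE; last by move=> x [].
    - exact: measurable_Gset.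
    - exact: measurable_Sigma0.
  apply/eqP; rewrite eq_le probability_le1 /=; last exact: measurable_Sigma0.
  by apply: le_trans GS; rewrite nuG.
rewrite pair_big; apply: eq_bigr => -[a b] _ /=.
rewrite Gset_first_two_fibre; case: ifP => _; last by rewrite measure0 mule0.
by rewrite (probability_setI_full (measurable_cyl2 a b) (measurable_Sigma0 M0) nuS).
Qed.

End green_cylinders.

Theorem lemma3 (R : realType) (K N : nat)
  (A : 'M[int]_K.+1) (D : 'M[int]_N.+1) (M0 : 'M[int]_(K.+1 + N.+1))
  (A' : 'M[int]_K.+1) (D' : 'M[int]_N.+1) (n_ n'_ : nat -> nat)
  (phi : sq K N -> R) (Cphi P : R) (m : nat)
  (nu : probability (Msp K N) R) (H : sq K N -> R) :
  (* A, D irreducible {0,1}-matrices; M0 a {0,1}-matrix with diagonal blocks A, D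
     and some power with all entries positive *)
  zero_one A -> zero_one D -> zero_one M0 ->
  irreducible_mx A -> irreducible_mx D ->
  (forall i j, M0 (lshift N.+1 i) (lshift N.+1 j) = A i j) ->
  (forall i j, M0 (rshift K.+1 i) (rshift K.+1 j) = D i j) ->
  positive_power M0 ->
  (* phi Lipschitz on Sigma_0 with constant Cphi, same top_pressure P on Sigma_A, Sigma_D *)
  (forall x y, Sigma0 M0 x -> Sigma0 M0 y -> `|phi x - phi y| <= Cphi * sq_dist x y) ->
  top_pressure (SigmaA M0) phi = P -> top_pressure (SigmaD M0) phi = P ->
  (* A' <= A, D' <= D, A' <> A, D' <> D, row conditions *)
  zero_one A' -> zero_one D' ->
  (forall i j, A' i j <= A i j) -> (forall i j, D' i j <= D i j) ->
  A' <> A -> D' <> D ->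
  (forall k : 'I_K.+1, (exists i : 'I_N.+1, M0 (rshift K.+1 i) (lshift N.+1 k) = 1) ->
     exists j, A' k j != 0) ->
  (forall l : 'I_N.+1, (exists i : 'I_K.+1, M0 (lshift N.+1 i) (rshift K.+1 l) = 1) ->
     exists j, D' l j != 0) ->
  (* (n_m), (n'_m) increasing sequences tending to infinity *)
  (forall k, (n_ k < n_ k.+1)%N) -> (forall k, (n'_ k < n'_ k.+1)%N) ->
  let Pm := top_pressure (SigmaM M0 A' D' (n_ m) (n'_ m)) phi in
  let L := LG M0 A' D' (n_ m) (n'_ m) phi Pm in
  (* nu_m: a probability on G with  int L f dnu = int f dnu *)
  nu (Gset M0) = 1%E ->
  (forall f : sq K N -> R, (forall x, Gset M0 x -> 0 <= f x) ->
     d_continuous_on (Gset M0) f ->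
     (\int[nu]_(x in Gset M0) L (fun y => (f y)%:E) x =
      \int[nu]_(x in Gset M0) (f x)%:E)%E) ->
  (* H_m = lim (1/n) sum_{k<n} L^k 1_G, uniformly on G *)
  (forall e : R, 0 < e -> exists n0 : nat, forall n, (n0 <= n)%N ->
     forall x, Gset M0 x ->
       (`| cesaro_LG M0 A' D' (n_ m) (n'_ m) phi Pm n x - (H x)%:E | < e%:E)%E) ->
  (* ... which is a positive continuous eigenfunction with int H dnu = 1 *)
  (forall x, Gset M0 x -> 0 < H x) -> d_continuous_on (Gset M0) H ->
  (forall x, Gset M0 x -> L (fun y => (H y)%:E) x = (H x)%:E) ->
  (\int[nu]_(x in Gset M0) (H x)%:E = 1)%E ->
  (\sum_(a : letter K N) \sum_(b : letter K N)
     (if green M0 a b then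
        ereal_sup [set (H x)%:E | x in cyl2 a b `&` Sigma0 M0] * nu (cyl2 a b)
      else 0)
   <= (expR (Cphi / 2))%:E)%E.
Proof.
move=> _ _ M01 _ _ _ _ M0pos phi_lip _ _ _ _ _ _ _ _ _ _ _ _ Pm L nuG _ ces_cvg H_gt0 _ _ H_int.
have Cphi_ge0 : 0 <= Cphi := lipschitz_const_ge0 M01 M0pos phi_lip.
have H_distortion x x' : Gset M0 x -> Gset M0 x' -> first_two x = first_two x' ->
    H x <= expR (Cphi / 2) * H x'.
  move=> Gx Gx' [x0 x1]; have xx' : agree 2 x x' by case=> [|[|]].
  apply: le_trans (uniform_limit_distortion phi_lip Cphi_ge0 ces_cvg _ _ Gx Gx' xx') _.
  by rewrite ler_pM2r ?H_gt0 // ler_expR expr2; lra.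
have H_ge0 x : Gset M0 x -> 0 <= H x by move/H_gt0/ltW.
rewrite green_sum_fibreE // -[leRHS]mule1 -H_int.
exact (sum_fibre_sup_le nu (measurable_Gset M0) measurable_first_two_fibre
  (expR_gt0 _) H_ge0 H_distortion).
Qed.
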